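(* Let $B$ be a commutative ring with identity and $A$ a subring of $B$ containing the identity of $B$. Let $i^*:\operatorname{spec} B\to \operatorname{spec} A$ be the map $i^*(P)=P\cap A$. Then $A$ is a dense subring of $B$ if and only if $i^*$ is one-one and open, where ''open'' means: for every open set $U$ of $\operatorname{spec} B$, the set $i^*(U)$ is open in the subspace $i^*(\operatorname{spec} B)$ of $\operatorname{spec} A$.
   Context: All rings are commutative with identity; subrings contain the identity of the larger ring. $\operatorname{spec} R$ denotes the set of prime ideals of $R$ with the Zariski topology. A subring $A$ of a ring $B$ is called a dense subring of $B$ if for every ideal $I$ of $B$ and every $b\in B$ with $b\notin \operatorname{rad}(I)$, there exists $a\in B$ with $a\notin \operatorname{rad}(I)$ such that $ab\in A$. Here $\operatorname{rad}(I)$ is the radical of $I$ in $B$. *)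

From HB Require Import structures.
From mathcomp Require Import all_boot all_algebra.
Set Implicit Arguments. Unset Strict Implicit. Unset Printing Implicit Defensive.
Import GRing.Theory.
Local Open Scope ring_scope.

Definition is_ideal (R : comPzRingType) (I : R -> Prop) : Prop :=
  [/\ I 0, (forall x y, I x -> I y -> I (x + y)) & (forall r x, I x -> I (r * x))].

Definition is_prime_ideal (R : comPzRingType) (P : R -> Prop) : Prop :=
  [/\ is_ideal P, ~ P 1 & (forall x y, P (x * y) -> P x \/ P y)].

Definition rad (R : comPzRingType) (I : R -> Prop) : R -> Prop :=
  fun x => exists n : nat, I (x ^+ n).

(* A "subset of spec R" is a predicate on subsets of R; only its values
   on prime ideals matter. *)
Definition zariski_open (R : comPzRingType) (U : (R -> Prop) -> Prop) : Prop :=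
  exists S : R -> Prop, forall P, is_prime_ideal P ->
    (U P <-> exists s, S s /\ ~ P s).

Definition contract (A B : comPzRingType) (i : A -> B) (P : B -> Prop) : A -> Prop :=
  fun a => P (i a).

Definition spec_image (A B : comPzRingType) (i : A -> B)
    (U : (B -> Prop) -> Prop) : (A -> Prop) -> Prop :=
  fun Q => exists P, [/\ is_prime_ideal P, U P & forall a, Q a <-> contract i P a].

Definition spec_map_injective (A B : comPzRingType) (i : A -> B) : Prop :=
  forall P1 P2 : B -> Prop, is_prime_ideal P1 -> is_prime_ideal P2 ->
    (forall a, contract i P1 a <-> contract i P2 a) -> (forall x, P1 x <-> P2 x).

Definition open_in_subspace (A : comPzRingType) (Y W : (A -> Prop) -> Prop) : Prop :=
  exists O, zariski_open O /\
    (forall Q, is_prime_ideal Q -> (W Q <-> O Q /\ Y Q)).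

Definition spec_map_open (A B : comPzRingType) (i : A -> B) : Prop :=
  forall U, zariski_open U ->
    open_in_subspace (spec_image i (fun _ => True)) (spec_image i U).

Definition dense_subring (A B : comPzRingType) (i : A -> B) : Prop :=
  forall (I : B -> Prop) (b : B), is_ideal I -> ~ rad I b ->
    exists a : B, ~ rad I a /\ exists c : A, i c = a * b.

(* A is dense in B exactly when every b outside a prime P of B has a multiple
   in A outside P, i.e. when the basic opens D(i c), c in A, form a basis of
   spec B (Krull's lemma turns the radical condition into one on primes).
   Such a basis separates points, so i^* is injective, and
   i^*(D(i c)) = D(c) ∩ i^*(spec B), so i^* is open onto its image.
   Conversely, if i^* is injective and open, the image of D(b) is
   D(T) ∩ i^*(spec B) for some T ⊆ A; a prime P with b outside P contracts
   into it, giving t in T with i t outside P, and injectivity forces a power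
   of i t into bB. *)

From Pilot Require Import Defs.
From HB Require Import structures.
From mathcomp Require Import all_boot all_algebra.
From mathcomp Require Import boolp classical_sets.
From mathcomp Require Import ring.
Set Implicit Arguments. Unset Strict Implicit. Unset Printing Implicit Defensive.
Import GRing.Theory.
Local Open Scope ring_scope.
Local Open Scope classical_set_scope.

Section Ideals.
Variable R : comPzRingType.
Implicit Types (I J K P : set R) (b r s x y : R).

Lemma prime_ideal_is_ideal P : is_prime_ideal P -> is_ideal P.
Proof. by case. Qed.

Lemma ideal_mull I r x : is_ideal I -> I x -> I (r * x).
Proof. by case=> _ _ IM; apply: IM. Qed.

Lemma ideal_mulr I x y : is_ideal I -> I x -> I (x * y).
Proof. by rewrite mulrC; apply: ideal_mull. Qed.

Lemma prime_rad_sub I P x : is_prime_ideal P -> I `<=` P -> Defs.rad I x -> P x.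
Proof.
move=> [_ P1 Pm] IP [n]; move/IP; elim: n => [|n IHn]; first by rewrite expr0.
by rewrite exprS => /Pm [].
Qed.

Lemma prime_rad P x : is_prime_ideal P -> Defs.rad P x -> P x.
Proof. by move=> Pprime; apply: prime_rad_sub. Qed.

Definition principal_ideal b : set R := fun x => exists r, x = r * b.

Lemma is_ideal_principal b : is_ideal (principal_ideal b).
Proof.
split; first by exists 0; rewrite mul0r.
- by move=> _ _ [r1 ->] [r2 ->]; exists (r1 + r2); rewrite mulrDl.
- by move=> r _ [r1 ->]; exists (r * r1); rewrite mulrA.
Qed.

Definition adjoin_ideal J x : set R := fun z => exists p r, J p /\ z = p + r * x.

Lemma is_ideal_adjoin J x : is_ideal J -> is_ideal (adjoin_ideal J x).
Proof.
move=> [J0 JD JM]; split; first by exists 0, 0; split; last by ring.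
- move=> _ _ [p1 [r1 [Jp1 ->]]] [p2 [r2 [Jp2 ->]]].
  by exists (p1 + p2), (r1 + r2); split; [exact: JD | ring].
- move=> r _ [p [r1 [Jp ->]]].
  by exists (r * p), (r * r1); split; [exact: JM | ring].
Qed.

Lemma sub_adjoin_ideal J x : J `<=` adjoin_ideal J x.
Proof. by move=> p Jp; exists p, 0; split; last by ring. Qed.

Lemma adjoin_ideal_id J x : J 0 -> adjoin_ideal J x x.
Proof. by move=> J0; exists 0, 1; split; last by ring. Qed.

Lemma maximal_avoiding_prime P s : is_ideal P -> ~ Defs.rad P s ->
  (forall K, is_ideal K -> P `<=` K -> ~ Defs.rad K s -> K `<=` P) ->
  is_prime_ideal P.
Proof.
move=> Pid nPs Pmax; have [P0 PD PM] := Pid.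
have hit x : ~ P x -> exists p r n, P p /\ p + r * x = s ^+ n.
  move=> nPx; apply: contrapT => nhit; apply/nPx/(Pmax (adjoin_ideal P x)).
  - exact: is_ideal_adjoin.
  - exact: sub_adjoin_ideal.
  - by move=> [n [p [r [Pp E]]]]; apply: nhit; exists p, r, n.
  - exact: adjoin_ideal_id.
split=> //; first by move=> P1; apply: nPs; exists 0%N; rewrite expr0.
move=> x y Pxy; apply: contrapT => /not_orP [/hit [p1 [r1 [n1 [Pp1 E1]]]]].
move=> /hit [p2 [r2 [n2 [Pp2 E2]]]]; apply: nPs; exists (n1 + n2)%N.
rewrite exprD -E1 -E2.
have -> : (p1 + r1 * x) * (p2 + r2 * y) =
    (p2 + r2 * y) * p1 + (r1 * x * p2 + r1 * r2 * (x * y)) by ring.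
by apply: (PD); [|apply: (PD)]; apply: (PM).
Qed.

Lemma chain_union_ideal I (F : set (set R)) :
  is_ideal I -> total_on F subset -> (forall X, F X -> is_ideal (X `|` I)) ->
  is_ideal (\bigcup_(X in F) X `|` I).
Proof.
move=> Iid Ftot FI; set U := \bigcup_(X in F) X `|` I.
pose G X := F X \/ X = set0.
have GI X : G X -> is_ideal (X `|` I) by case=> [/FI //|->]; rewrite set0U.
have GU X : G X -> X `|` I `<=` U.
  by case=> [FX|->]; [apply: setSU; exact: bigcup_sup | rewrite set0U; exact: subsetUr].
have memG u : U u -> exists2 X, G X & (X `|` I) u.
  case=> [[X FX Xu]|Iu]; first by exists X; [left | left].
  by exists set0; [right | right].
have common x y : U x -> U y -> exists2 X, G X & (X `|` I) x /\ (X `|` I) y.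
  move=> /memG [X GX Xx] /memG [Y GY Yy].
  have [XY|YX] : X `<=` Y \/ Y `<=` X.
  - case: GX GY => [FX|->] [FY|->]; [exact: Ftot | by right | by left | by left].
  - by exists Y => //; split; first exact: (setSU XY Xx).
  - by exists X => //; split; last exact: (setSU YX Yy).
split; first by right; case: Iid.
- move=> x y Ux Uy; have [X GX [Xx Xy]] := common x y Ux Uy.
  by apply: (GU X GX); case: (GI X GX) => _ XD _; apply: XD.
- move=> r x Ux; have [X GX [Xx _]] := common x x Ux Ux.
  exact: (GU X GX) _ (ideal_mull r (GI X GX) Xx).
Qed.

Lemma exists_prime_avoiding I s : is_ideal I -> ~ Defs.rad I s ->
  exists P, [/\ is_prime_ideal P, I `<=` P & ~ P s].
Proof.
move=> Iid nIs.
(* Zorn_bigcup also needs the union of the empty chain, set0: joining I to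
   every candidate makes that case the ideal I itself. *)
pose good X := is_ideal (X `|` I) /\ ~ Defs.rad (X `|` I) s.
have [M [[MI nMs] Mmax]] : exists M, good M /\ forall X, M `<` X -> ~ good X.
  apply: Zorn_bigcup => F Fgood Ftot; split.
    by apply: chain_union_ideal => // X /Fgood [].
  move=> [n [[X FX Xs]|Is]]; last by apply: nIs; exists n.
  by have [_ nXs] := Fgood X FX; apply: nXs; exists n; left.
exists (M `|` I); split; last by move=> Ms; apply: nMs; exists 1%N; rewrite expr1.
- apply: (maximal_avoiding_prime MI nMs) => K Kid MK nKs.
  apply: contrapT => nKM; apply: (Mmax K).
    split; first by move=> x Mx; apply: MK; left.
    by move=> KM; apply: nKM => x /KM; left.
  have IK : I `<=` K by move=> x Ix; apply: MK; right.
  by rewrite /good (setUidPl _ _).2.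
- exact: subsetUr.
Qed.

End Ideals.

Lemma zariski_open_basic (R : comPzRingType) (b : R) :
  zariski_open (fun P : set R => ~ P b).
Proof.
exists (fun s => s = b) => P _; split; first by exists b.
by move=> [_ [-> ?]].
Qed.

Section Contraction.
Variables (A B : comPzRingType) (i : {rmorphism A -> B}).

Lemma contract_prime P : is_prime_ideal P -> is_prime_ideal (contract i P).
Proof.
move=> [[P0 PD PM] P1 Pm]; rewrite /contract; split; first split.
- by rewrite rmorph0.
- by move=> x y hx hy; rewrite rmorphD; apply: PD.
- by move=> r x hx; rewrite rmorphM; apply: PM.
- by rewrite rmorph1.
- by move=> x y; rewrite rmorphM; apply: Pm.
Qed.

Definition dense_at_primes := forall (P : set B) (b : B), is_prime_ideal P -> ~ P b ->
  exists c : A, ~ P (i c) /\ principal_ideal b (i c).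

Lemma dense_subringP : dense_subring i <-> dense_at_primes.
Proof.
split=> [dense P b Pprime nPb | dense I b Iid nIb].
  have [a [nIa [c Ec]]] := dense P b (prime_ideal_is_ideal Pprime)
    (fun Pb => nPb (prime_rad Pprime Pb)).
  exists c; split; last by exists a.
  have [_ _ Pm] := Pprime.
  by rewrite Ec => /Pm [Pa|//]; apply: nIa; exists 1%N.
have [P [Pprime IP nPb]] := exists_prime_avoiding Iid nIb.
have [c [nPc [a Ec]]] := dense P b Pprime nPb.
exists a; split; last by exists c.
move=> /(prime_rad_sub Pprime IP) Pa; apply: nPc; rewrite Ec.
exact: ideal_mulr (prime_ideal_is_ideal Pprime) Pa.
Qed.

Lemma dense_spec_map_injective : dense_at_primes -> spec_map_injective i.
Proof.
move=> dense.
suff sub P1 P2 : is_prime_ideal P1 -> is_prime_ideal P2 ->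
    (forall a, contract i P1 a <-> contract i P2 a) -> P1 `<=` P2.
  move=> P1 P2 P1p P2p eqc x.
  by split; apply: sub => // a; split=> /eqc.
move=> P1p P2p eqc x P1x; apply: contrapT => nP2x.
have [c [nP2c [a Ec]]] := dense P2 x P2p nP2x.
apply/nP2c/(eqc c).1; rewrite /contract Ec.
exact: ideal_mull (prime_ideal_is_ideal P1p) P1x.
Qed.

Lemma dense_spec_map_open : dense_at_primes -> spec_map_open i.
Proof.
move=> dense U [S US].
(* i^*(U) is cut out by the c with D(i c) contained in U. *)
pose T (c : A) := forall P, is_prime_ideal P -> ~ P (i c) -> U P.
exists (fun Q => exists c, T c /\ ~ Q c); split; first by exists T.
move=> Q Qprime; split=> [[P [Pprime UP eqQ]] | [[c [Tc nQc]] [P [Pprime _ eqQ]]]].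
  have [s [Ss nPs]] := (US P Pprime).1 UP.
  have [c [nPc [a Ec]]] := dense P s Pprime nPs.
  split; last by exists P.
  exists c; split; last by move/eqQ.
  move=> P' P'prime nP'c; apply/(US P' P'prime); exists s; split=> // P's.
  by apply: nP'c; rewrite Ec; apply: ideal_mull (prime_ideal_is_ideal P'prime) P's.
by exists P; split=> //; apply: Tc => // Pc; apply/nQc/eqQ.
Qed.

Lemma spec_map_open_injective_dense :
  spec_map_injective i -> spec_map_open i -> dense_at_primes.
Proof.
move=> inj op P b Pprime nPb.
have [O [[S OS] imO]] := op _ (zariski_open_basic b).
have [t [St nPt]] : exists t, S t /\ ~ P (i t).
  have Qprime := contract_prime Pprime.
  have [] := (imO _ Qprime).1; first by exists P.
  by move=> /(OS _ Qprime) [t [St nQt]] _; exists t.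
(* A prime P' containing b but not i t would contract into i^*(D(b)), and
   injectivity would then put b outside P'. *)
have [n tn] : Defs.rad (principal_ideal b) (i t).
  apply: contrapT => nrt.
  have [P' [P'prime bP' nP't]] := exists_prime_avoiding (is_ideal_principal b) nrt.
  have Qprime := contract_prime P'prime.
  have [|P'' [P''prime nP''b eqQ]] := (imO _ Qprime).2.
    by split; [apply/(OS _ Qprime); exists t | exists P'].
  apply/nP''b/(inj P' P'' P'prime P''prime _ b).1; first by move=> a; apply: eqQ.
  by apply: bP'; exists 1; rewrite mul1r.
exists (t ^+ n); split; last by rewrite rmorphXn.
rewrite rmorphXn => Ptn; apply/nPt/(prime_rad Pprime).
by exists n.
Qed.

End Contraction.

Theorem theorem4p1 (A B : comPzRingType) (i : {rmorphism A -> B}) :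
  injective i ->
  (dense_subring i <-> spec_map_injective i /\ spec_map_open i).
Proof.
(* The equivalence holds for every ring morphism. *)
move=> _; rewrite dense_subringP; split=> [dense | [inj op]].
  by split; [apply: dense_spec_map_injective | apply: dense_spec_map_open].
exact: spec_map_open_injective_dense.
Qed.
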